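(* Let $k \geq 2$, $n \geq 1$, $\Sigma_k = \{0,1,\ldots,k-1\}$, and let $u \in \Sigma_k^n$ be primitive. Define the word $f_u$ symbol by symbol as follows: $f_u[i] = u[i]$ for $1 \leq i \leq n$; for $i \geq n+1$, if $f_u[i-n+1..i-1] = 0^{n-1}$ the construction terminates, and otherwise $f_u[i]$ is the smallest letter of $\Sigma_k$ such that $f_u[i-n+1..i]$ is primitive (such a letter always exists). Then $f_u$ is finite, i.e. the construction terminates after finitely many steps.
   Context: A word $w$ is primitive if there is no word $x$ and integer $p \geq 2$ with $w = x^p$. For a word $w$, $w[i]$ denotes its $i$-th symbol and $w[i..j] = w[i]w[i+1]\cdots w[j]$. *)

From mathcomp Require Import all_boot.
Set Implicit Arguments. Unset Strict Implicit. Unset Printing Implicit Defensive.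

(* Words over Sigma_k = {0,...,k-1} are represented as seq nat whose letters are < k. *)

Definition primitive (w : seq nat) : Prop :=
  ~ exists (x : seq nat) (p : nat), 2 <= p /\ w = flatten (nseq p x).

(* The len symbols immediately preceding (0-indexed) position i of f,
   i.e. f[i-len .. i-1]  (in 1-indexed terms, f[i-len+1 .. i] for position i+1). *)
Definition window (f : seq nat) (i len : nat) : seq nat :=
  take len (drop (i - len) f).

Definition fu_terminated (k n : nat) (u f : seq nat) : Prop :=
  [/\ n <= size f,
      take n f = u,
      (forall i, n <= i < size f ->
         let w := window f i n.-1 in
         let a := nth 0 f i in
         [/\ w <> nseq n.-1 0,
             a < k,
             primitive (rcons w a)
           & forall b, b < a -> ~ primitive (rcons w b)])
    & window f (size f) n.-1 = nseq n.-1 0].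

From mathcomp Require Import all_boot zify.
From Stdlib Require Import Classical.
Set Implicit Arguments. Unset Strict Implicit. Unset Printing Implicit Defensive.

(* Termination rests on a rigidity property: beyond the first n letters, a
   nonzero letter is never followed by another nonzero one.  A nonzero letter
   is chosen only when appending 0 to its window gives a proper power; two
   nonzero letters at positions T < S with only zeros between them would make
   the windows at T and S, completed by 0, two proper powers overlapping with
   shift S - T, and the Fine-Wilf theorem (with the arithmetic of two divisors
   of n that are at most n/2) forces the letter at T to be 0.  As every window
   after the first n letters contains a nonzero letter, the word has at most 3n
   letters.  The least letter exists by Fine-Wilf as well: appending 0 and
   appending 1 cannot both give proper powers. *)

Definition periodic (w : nat -> nat) (L p : nat) :=
  forall i, i + p < L -> w i = w (i + p).

Lemma eq_mod_subn a d e g : g %| d -> g %| e -> d <= a -> e <= a ->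
  a - d = a - e %[mod g].
Proof.
have subn_mod x : g %| x -> x <= a -> a - x = a %[mod g].
  move=> gx xa; apply/eqP; rewrite eq_sym eqn_mod_dvd; last lia.
  by rewrite subKn.
by move=> gd ge da ea; rewrite subn_mod // subn_mod.
Qed.

Section Periods.

Variable w : nat -> nat.

Lemma periodic_le L L' p : L' <= L -> periodic w L p -> periodic w L' p.
Proof. by move=> hL hp i hi; apply: hp; lia. Qed.

Lemma periodic_subE L p i : periodic w L p -> p <= i < L -> w (i - p) = w i.
Proof. by move=> hp hi; rewrite hp ?subnK //; lia. Qed.

Lemma periodic_modE L p i : 0 < p -> periodic w L p -> i < L -> w i = w (i %% p).
Proof.
move=> p0 hp; elim/ltn_ind: i => i IH iL.
have [ltip|leip] := ltnP i p; first by rewrite modn_small.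
rewrite -(periodic_subE hp) ?leip // IH; try lia.
by rewrite -[in RHS](subnK leip) modnDr.
Qed.

Lemma periodic_mod_eq L p i j : 0 < p -> periodic w L p -> i < L -> j < L ->
  i = j %[mod p] -> w i = w j.
Proof.
by move=> p0 hp iL jL eij; rewrite (periodic_modE p0 hp iL) (periodic_modE p0 hp jL) eij.
Qed.

Theorem fine_wilf L p q : 0 < p -> 0 < q ->
  periodic w L p -> periodic w L q -> p + q <= L + gcdn p q ->
  periodic w L (gcdn p q).
Proof.
have [s] := ubnP (p + q); elim: s => // s IH in L p q *.
move=> /ltnSE hs p0 q0 hp hq hL.
wlog lepq : p q p0 q0 hp hq hL hs / p <= q.
  move=> H; have [le|/ltnW le] := leqP p q; first exact: H.
  by rewrite gcdnC; apply: H => //; rewrite addnC // gcdnC.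
have [<-|neqpq] := eqVneq p q; first by rewrite gcdnn.
have gcd_sub : gcdn p (q - p) = gcdn p q by rewrite -{2}(subnKC lepq) gcdnDl.
have g_le : gcdn p q <= q - p.
  by apply: dvdn_leq; [lia | rewrite dvdn_sub ?dvdn_gcdr ?dvdn_gcdl].
have hqp : periodic w (L - p) (q - p).
  by move=> i hi; rewrite hq ?(hp (i + (q - p))) -?addnA ?subnK //; lia.
have hg : periodic w (L - p) (gcdn p q).
  rewrite -gcd_sub; apply: IH; rewrite ?gcd_sub //; try lia.
  exact: periodic_le (leq_subr p L) hp.
have g0 : 0 < gcdn p q by rewrite gcdn_gt0 p0.
move=> i hi; have lt1 := ltn_pmod i p0; have lt2 := ltn_pmod (i + gcdn p q) p0.
rewrite (periodic_modE p0 hp (i := i)) ?(periodic_modE p0 hp (i := i + _)); try lia.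
apply: (periodic_mod_eq g0 hg); try lia.
by rewrite !modn_dvdm ?dvdn_gcdl // modnDr.
Qed.

End Periods.

Lemma size_flatten_nseq (x : seq nat) p : size (flatten (nseq p x)) = p * size x.
Proof. by rewrite size_flatten /shape map_nseq sumn_nseq mulnC. Qed.

Lemma nth_flatten_nseq (x : seq nat) p j : j < p * size x ->
  nth 0 (flatten (nseq p x)) j = nth 0 x (j %% size x).
Proof.
elim: p j => [|p IH] j /=; first by rewrite mul0n.
rewrite mulSn nth_cat => hj; have [ltjx|lexj] := ltnP j (size x).
  by rewrite modn_small.
by rewrite IH; [rewrite -[in RHS](subnK lexj) modnDr | lia].
Qed.

Lemma not_primitive_periodic w : ~ primitive w -> 0 < size w ->
  exists2 d, [/\ 0 < d, d %| size w & 2 * d <= size w]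
           & periodic (nth 0 w) (size w) d.
Proof.
move=> /NNPP[x [p [p2 ->]]]; rewrite size_flatten_nseq => hs.
exists (size x); first split.
- by case: (size x) hs; rewrite ?muln0.
- exact: dvdn_mull.
- by rewrite leq_mul2r p2 orbT.
by move=> i hi; rewrite !nth_flatten_nseq ?modnDr //; lia.
Qed.

Lemma periodic_last_letter_eq A B n d e : 0 < d -> 0 < e -> d + e <= n ->
  periodic A n d -> periodic B n e -> (forall j, j < n.-1 -> A j = B j) ->
  A n.-1 = B n.-1.
Proof.
move=> d0 e0 hn hA hB hAB.
have hAe : periodic A n.-1 e.
  by move=> i hi; rewrite (hAB i) 1?(hAB (i + e)) 1?hB //; lia.
have g0 : 0 < gcdn d e by rewrite gcdn_gt0 d0.
have hg := fine_wilf d0 e0 (periodic_le (leq_pred n) hA) hAe ltac:(lia).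
have eA : A (n.-1 - d) = A n.-1 by apply: (periodic_subE hA); lia.
have eB : B (n.-1 - e) = B n.-1 by apply: (periodic_subE hB); lia.
rewrite -eA -eB -hAB; last lia.
apply: (periodic_mod_eq g0 hg); try lia.
by apply: eq_mod_subn; rewrite ?dvdn_gcdl ?dvdn_gcdr //; lia.
Qed.

Lemma exists_least_primitive_letter k v : 2 <= k ->
  exists a, [/\ a < k, primitive (rcons v a)
                & forall b, b < a -> ~ primitive (rcons v b)].
Proof.
move=> k2; have [prim0|nprim0] := classic (primitive (rcons v 0)).
  by exists 0; split=> [|//|b]; rewrite ?ltn0 //; lia.
exists 1; split=> [||[] // _]; first lia.
apply: NNPP => nprim1.
have [d [d0 _ d2] hd] := not_primitive_periodic nprim0 ltac:(by rewrite size_rcons).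
have [e [e0 _ e2] he] := not_primitive_periodic nprim1 ltac:(by rewrite size_rcons).
rewrite !size_rcons in d2 hd e2 he.
have agree j : j < size v -> nth 0 (rcons v 0) j = nth 0 (rcons v 1) j.
  by move=> hj; rewrite !nth_rcons hj.
have /= := periodic_last_letter_eq (n := (size v).+1) d0 e0 ltac:(lia) hd he agree.
by rewrite !nth_rcons ltnn eqxx.
Qed.

Lemma divisor_pair_bound n d e : 0 < d -> 0 < e -> d %| n -> e %| n ->
  2 * d <= n -> 2 * e <= n -> d + e + minn d e <= n + gcdn d e.
Proof.
wlog lede : d e / d <= e.
  move=> H d0 e0 dn en d2 e2; have [le|nle] := boolP (d <= e); first exact: H.
  by rewrite gcdnC minnC (addnC d); apply: H => //; lia.
move=> d0 e0 dn en d2 e2; have g0 : 0 < gcdn d e by rewrite gcdn_gt0 d0.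
have [dvd_de|ndvd_de] := boolP (d %| e).
  by rewrite (gcdn_idPl dvd_de); lia.
have [n_ge|n_lt] := leqP (2 * e + d) n; first lia.
have n_eq : n = 2 * e.
  have [c n_ce] := dvdnP en; rewrite n_ce in n_lt e2 *.
  have c_lt3 : c < 3 by rewrite -(ltn_pmul2r e0); lia.
  have c_ge2 : 2 <= c by rewrite -(leq_pmul2r e0); lia.
  by have -> : c = 2 by lia.
set g := gcdn d e in g0 *.
have [a da] := dvdnP (dvdn_gcdl d e); have [b eb] := dvdnP (dvdn_gcdr d e).
rewrite -/g in da eb.
have a_dvd2 : a %| 2.
  rewrite -(dvdn_pmul2r g0) -da /g muln_gcdr dvdn_gcd dvdn_mull //=.
  by rewrite -n_eq.
have a_eq : a = 2.
  have := dvdn_leq (isT : 0 < 2) a_dvd2.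
  case: a {a_dvd2} da => [|[|[]]] //; first lia.
  by rewrite mul1n => da; rewrite da /g dvdn_gcdr in ndvd_de.
have b_ge3 : 3 <= b.
  case: b eb => [|[|[|]]] // eb; try lia.
  by rewrite da eb a_eq dvdnn in ndvd_de.
rewrite da eb a_eq; have := leq_mul b_ge3 (leqnn g); lia.
Qed.

(* P and Q are the windows at two nonzero letters at positions T < S = T + m,
   each completed by the letter 0: Q is P shifted by m up to the point where
   the letter at T appears (at index n.-1 - m), followed only by zeros. *)
Lemma shifted_periodic_windows_absurd n m d e (P Q : nat -> nat) :
  0 < d -> d %| n -> 2 * d <= n -> periodic P n d ->
  0 < e -> e %| n -> 2 * e <= n -> periodic Q n e ->
  0 < m -> m < n -> P n.-1 = 0 ->
  (forall j, j + m < n.-1 -> Q j = P (j + m)) ->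
  Q (n.-1 - m) <> 0 ->
  (forall j, n.-1 - m < j < n -> Q j = 0) -> False.
Proof.
move=> d0 dn d2 hP e0 en e2 hQ m0 mn P0 hPQ Qt Qz.
set t := n.-1 - m in Qt Qz.
have lt_me : m < e.
  rewrite ltnNge; apply/negP => le_em; apply: Qt.
  by rewrite hQ ?Qz //; lia.
have [le_dm|lt_md] := leqP d m.
  have Qt_eq : Q t = Q (t + d).
    rewrite -(periodic_subE hQ (i := t)); last lia.
    rewrite hPQ; last lia.
    rewrite hP; last lia.
    rewrite (addnAC _ m d) -hPQ; last lia.
    by rewrite hQ; [congr Q | ]; lia.
  by apply: Qt; rewrite Qt_eq Qz //; lia.
have hQd : periodic Q t d.
  move=> i hi; rewrite (hPQ i) ?(hPQ (i + d)); try lia.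
  by rewrite (hP (i + m)) 1?(addnAC i m d) //; lia.
have hQe : periodic Q t e by apply: periodic_le hQ; lia.
have g0 : 0 < gcdn d e by rewrite gcdn_gt0 d0.
have hg : periodic Q t (gcdn d e).
  apply: fine_wilf => //.
  by have := divisor_pair_bound d0 e0 dn en d2 e2; lia.
have Q_td : Q (t - d) = 0.
  rewrite hPQ; last lia.
  rewrite (_ : t - d + m = n.-1 - d); last lia.
  by rewrite (periodic_subE hP) ?P0 //; lia.
apply: Qt; rewrite -(periodic_subE hQ (i := t)); last lia.
rewrite -Q_td; apply: (periodic_mod_eq g0 hg); try lia.
by apply: eq_mod_subn; rewrite ?dvdn_gcdl ?dvdn_gcdr //; lia.
Qed.

Lemma size_window f i len : len <= i <= size f -> size (window f i len) = len.
Proof. by move=> hi; rewrite /window size_take size_drop; apply/minn_idPl; lia. Qed.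

Lemma nth_window f i len j : len <= i <= size f -> j < len ->
  nth 0 (window f i len) j = nth 0 f (i - len + j).
Proof. by move=> hi hj; rewrite /window nth_take // nth_drop. Qed.

Lemma window_rcons f a i len : len <= i <= size f ->
  window (rcons f a) i len = window f i len.
Proof.
move=> hi; apply: (@eq_from_nth _ 0); first by rewrite !size_window ?size_rcons //; lia.
move=> j; rewrite size_window ?size_rcons => [hj|]; last lia.
by rewrite !nth_window ?size_rcons ?nth_rcons ?ifT //; lia.
Qed.

Lemma window_nseq0 f i len : len <= i <= size f ->
  (forall j, i - len <= j < i -> nth 0 f j = 0) -> window f i len = nseq len 0.
Proof.
move=> hi hz; apply: (@eq_from_nth _ 0); first by rewrite size_window ?size_nseq.
move=> j; rewrite size_window // => hj.
by rewrite nth_window // nth_nseq hj hz //; lia.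
Qed.

Section Construction.

Variables (k n : nat) (u : seq nat).

Definition fu_step (f : seq nat) i : Prop :=
  let w := window f i n.-1 in
  let a := nth 0 f i in
  [/\ w <> nseq n.-1 0, a < k, primitive (rcons w a)
    & forall b, b < a -> ~ primitive (rcons w b)].

Definition fu_prefix (f : seq nat) : Prop :=
  [/\ n <= size f, take n f = u & forall i, n <= i < size f -> fu_step f i].

Lemma fu_step_nonzero f i : fu_step f i -> nth 0 f i <> 0 ->
  ~ primitive (rcons (window f i n.-1) 0).
Proof. by case=> _ _ _ least nz; apply: least; lia. Qed.

Lemma fu_prefix_window_nonzero f i : fu_prefix f -> n <= i < size f ->
  exists2 j, i - n.-1 <= j < i & nth 0 f j <> 0.
Proof.
case=> _ _ steps hi; apply: NNPP => all0.
have [nz _ _ _] := steps i hi; apply: nz; apply: window_nseq0; first lia.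
by move=> j hj; apply: NNPP => nzj; apply: all0; exists j.
Qed.

Lemma fu_prefix_nonzero_next f T S : fu_prefix f -> 2 <= n ->
  n <= T < S -> S < size f -> nth 0 f T <> 0 ->
  (forall j, T < j < S -> nth 0 f j = 0) -> nth 0 f S = 0.
Proof.
case=> [fn _ steps] n2 hTS Sf nzT zeros; apply: NNPP => nzS.
have stepS := steps S ltac:(lia).
have lt_mn : S - T < n.
  rewrite ltnNge; apply/negP => le_nm; case: stepS => + _ _ _; apply.
  by apply: window_nseq0 => [|j hj]; [lia | apply: zeros; lia].
have nprimT := fu_step_nonzero (steps T ltac:(lia)) nzT.
have nprimS := fu_step_nonzero stepS nzS.
have sT : size (window f T n.-1) = n.-1 by rewrite size_window //; lia.
have sS : size (window f S n.-1) = n.-1 by rewrite size_window //; lia.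
have [d [d0 dn d2] hd] := not_primitive_periodic nprimT ltac:(by rewrite size_rcons).
have [e [e0 en e2] he] := not_primitive_periodic nprimS ltac:(by rewrite size_rcons).
rewrite size_rcons sT prednK in dn d2 hd; last lia.
rewrite size_rcons sS prednK in en e2 he; last lia.
apply: (shifted_periodic_windows_absurd (m := S - T) d0 dn d2 hd e0 en e2 he);
  try lia.
- by rewrite nth_rcons sT ltnn eqxx.
- move=> j hj; rewrite !nth_rcons sT sS ifT ?ifT; try lia.
  by rewrite !nth_window //; try (congr nth; lia); lia.
- rewrite nth_rcons sS ifT ?nth_window; try lia.
  by rewrite (_ : _ + _ = T) //; lia.
- move=> j hj; rewrite nth_rcons sS; case: ltnP => [ltj|gej].
    by rewrite nth_window ?zeros //; lia.
  by rewrite ifT //; apply/eqP; lia.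
Qed.

Lemma fu_prefix_zeros_after_nonzero f T : fu_prefix f -> 2 <= n ->
  n <= T < size f -> nth 0 f T <> 0 -> forall S, T < S < size f -> nth 0 f S = 0.
Proof.
move=> hf n2 hT nzT S; elim/ltn_ind: S => S IH hS.
by apply: (fu_prefix_nonzero_next hf n2 _ _ nzT) => [||j hj]; [lia | lia | apply: IH; lia].
Qed.

Lemma fu_prefix_size f : fu_prefix f -> 2 <= n -> size f <= 3 * n.
Proof.
move=> hf n2; rewrite leqNgt; apply/negP => big.
have [T1 hT1 nzT1] := fu_prefix_window_nonzero (i := 3 * n) hf ltac:(lia).
have [T2 hT2 nzT2] := fu_prefix_window_nonzero (i := T1) hf ltac:(lia).
by apply: nzT1; apply: (fu_prefix_zeros_after_nonzero hf n2 _ nzT2); lia.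
Qed.

Lemma fu_prefix_rcons f a : fu_prefix f -> fu_step (rcons f a) (size f) ->
  fu_prefix (rcons f a).
Proof.
case=> fn take_u steps step_a; split; rewrite ?size_rcons //; first lia.
  by rewrite -cats1 takel_cat.
move=> i /andP[ni]; rewrite ltnS leq_eqVlt => /predU1P[->//|ltif].
have [nz ak prim least] := steps i ltac:(lia).
by rewrite /fu_step window_rcons ?nth_rcons ?ltif //; lia.
Qed.

Lemma fu_prefix_terminates f : 2 <= k -> fu_prefix f ->
  exists f', fu_terminated k n u f'.
Proof.
move=> k2; have [B] := ubnP (3 * n - size f); elim: B f => // B IH f /ltnSE hB hf.
have [last0|lastnz] := eqVneq (window f (size f) n.-1) (nseq n.-1 0).
  by exists f; case: hf.
have n2 : 2 <= n by case: n lastnz => [|[]]; rewrite // /window take0.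
have [fn _ _] := hf.
have [a [ak prim least]] := exists_least_primitive_letter (window f (size f) n.-1) k2.
have hfa : fu_prefix (rcons f a).
  apply: fu_prefix_rcons => //.
  by rewrite /fu_step nth_rcons ltnn eqxx window_rcons //; [split=> //; apply/eqP | lia].
apply: (IH (rcons f a)) => //.
by have := fu_prefix_size hfa n2; rewrite size_rcons; lia.
Qed.

End Construction.

Theorem lemma4 (k n : nat) (u : seq nat) :
  2 <= k -> 1 <= n ->
  size u = n -> all (fun a => a < k) u ->
  primitive u ->
  exists f : seq nat, fu_terminated k n u f.
Proof.
move=> k2 _ hu _ _; apply: (fu_prefix_terminates k2 (f := u)).
by split=> [|//|i]; rewrite -hu ?take_size //; lia.
Qed.
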